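(* For any $x\in\mathrm{St}(d,r)^\epsilon$ and $x'=\mathrm{Proj}_{\mathrm{St}}(x)$, we have $\langle\nabla\mathcal{L}(x'),x-x'\rangle=0$.
   Context: $\langle A,B\rangle=\mathrm{Tr}(AB^\top)$; $\mathrm{sym}(A)=\frac12(A+A^\top)$; $\|\cdot\|_F$ Frobenius norm. $\mathrm{St}(d,r)=\{x\in\mathbb{R}^{d\times r}:x^\top x=I_r\}$; for $\epsilon\in(0,3/4)$, $\mathrm{St}(d,r)^\epsilon=\{x:\|x^\top x-I_r\|_F\le\epsilon\}$. $\mathrm{Proj}_{\mathrm{St}}(x)$ is the Frobenius-norm projection of $x$ onto $\mathrm{St}(d,r)$ (for $x$ of full column rank with thin SVD $x=USV^\top$ it equals $UV^\top$). $f:\mathbb{R}^{d\times r}\to\mathbb{R}$ is $C^2$, $\gamma>0$, and the merit function is $\mathcal{L}(x)=f(x)-\frac12\langle\mathrm{sym}(x^\top\nabla f(x)),x^\top x-I_r\rangle+\frac\gamma4\|x^\top x-I_r\|_F^2$. *)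

From HB Require Import structures.
From mathcomp Require Import all_boot all_order all_algebra.
From mathcomp Require Import all_classical all_reals all_analysis.
Set Implicit Arguments. Unset Strict Implicit. Unset Printing Implicit Defensive.
Import Order.TTheory GRing.Theory Num.Theory.
Import numFieldNormedType.Exports.
Local Open Scope ring_scope.

Section Defs.
Variable R : realType.

Definition mdot (m n : nat) (A B : 'M[R]_(m, n)) : R := \tr (A *m B^T).

Definition msym (n : nat) (A : 'M[R]_n) : 'M[R]_n := 2^-1 *: (A + A^T).

Definition frob (m n : nat) (A : 'M[R]_(m, n)) : R := Num.sqrt (mdot A A).

Variables d r : nat.

Definition stiefel (x : 'M[R]_(d, r)) : Prop := x^T *m x = 1%:M.

Definition stiefel_eps (eps : R) (x : 'M[R]_(d, r)) : Prop :=
  frob (x^T *m x - 1%:M) <= eps.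

Definition is_proj_St (x x' : 'M[R]_(d, r)) : Prop :=
  stiefel x' /\ forall y, stiefel y -> frob (x - x') <= frob (x - y).

Definition grad (F : 'M[R]_(d, r) -> R) (x : 'M[R]_(d, r)) : 'M[R]_(d, r) :=
  \matrix_(i < d, j < r) 'D_(delta_mx i j) F x.

Definition C2 (f : 'M[R]_(d, r) -> R) : Prop :=
  (forall x, differentiable f x) /\
  (forall x, differentiable (grad f) x) /\
  (forall w : 'M[R]_(d, r), continuous (fun x => 'D_w (grad f) x)).

Definition merit (f : 'M[R]_(d, r) -> R) (gamma : R) (x : 'M[R]_(d, r)) : R :=
  f x - 2^-1 * mdot (msym (x^T *m grad f x)) (x^T *m x - 1%:M)
  + gamma / 4 * (frob (x^T *m x - 1%:M)) ^+ 2.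

End Defs.

(* The penalty terms of the merit function vanish at a point x' of St(d,r),
   the second one to second order, so the gradient of L at x' is the tangent
   projection G - x' sym(x'^T G) of G = grad f x'.  A nearest point x' of
   St(d,r) to x maximises <x, Q x'> over orthogonal Q; testing plane rotations
   shows that x x'^T is symmetric, hence x = x' M with M = x'^T x symmetric
   (x' is the polar factor of x).  So x - x' = x' (M - I) lies in the normal
   space {x' P | P symmetric}, which is orthogonal to every tangent projection. *)

From HB Require Import structures.
From mathcomp Require Import all_boot all_order all_algebra.
From mathcomp Require Import all_classical all_reals all_analysis.
From mathcomp Require Import ring lra.
Import Order.TTheory GRing.Theory Num.Theory.
Import numFieldNormedType.Exports.
Local Open Scope ring_scope.
Local Open Scope classical_set_scope.

Set Implicit Arguments.
Unset Strict Implicit.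

Section FrobeniusProduct.
Variable R : realType.
Implicit Types m n : nat.

Lemma mdotE m n (A B : 'M[R]_(m, n)) : mdot A B = \sum_i \sum_j A i j * B i j.
Proof.
rewrite /mdot /mxtrace; apply: eq_bigr => i _; rewrite mxE.
by apply: eq_bigr => j _; rewrite mxE.
Qed.

Lemma mdot_ge0 m n (A : 'M[R]_(m, n)) : 0 <= mdot A A.
Proof.
rewrite mdotE; apply: sumr_ge0 => i _; apply: sumr_ge0 => j _.
by rewrite -expr2 sqr_ge0.
Qed.

Lemma mdotC m n (A B : 'M[R]_(m, n)) : mdot A B = mdot B A.
Proof. by rewrite /mdot -mxtrace_tr trmx_mul trmxK. Qed.

Lemma mdotDl m n (A B C : 'M[R]_(m, n)) : mdot (A + B) C = mdot A C + mdot B C.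
Proof. by rewrite /mdot mulmxDl mxtraceD. Qed.

Lemma mdotDr m n (A B C : 'M[R]_(m, n)) : mdot C (A + B) = mdot C A + mdot C B.
Proof. by rewrite mdotC mdotDl !(mdotC C). Qed.

Lemma mdotNl m n (A B : 'M[R]_(m, n)) : mdot (- A) B = - mdot A B.
Proof. by rewrite /mdot mulNmx raddfN. Qed.

Lemma mdotNr m n (A B : 'M[R]_(m, n)) : mdot B (- A) = - mdot B A.
Proof. by rewrite mdotC mdotNl mdotC. Qed.

Lemma mdotZl m n c (A B : 'M[R]_(m, n)) : mdot (c *: A) B = c * mdot A B.
Proof. by rewrite /mdot -scalemxAl mxtraceZ. Qed.

Lemma mdotZr m n c (A B : 'M[R]_(m, n)) : mdot B (c *: A) = c * mdot B A.
Proof. by rewrite mdotC mdotZl mdotC. Qed.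

Lemma mdot0r m n (A : 'M[R]_(m, n)) : mdot A 0 = 0.
Proof. by rewrite /mdot trmx0 mulmx0 mxtrace0. Qed.

Lemma mxtrace_mul_delta m n (A : 'M[R]_(m, n)) (i : 'I_n) (j : 'I_m) :
  \tr (A *m delta_mx i j) = A j i.
Proof.
rewrite /mxtrace (bigD1 j) //= big1 => [|k /negPf kj].
  rewrite mxE (bigD1 i) //= big1 => [|l /negPf li]; last by rewrite mxE li mulr0.
  by rewrite mxE !eqxx mulr1 !addr0.
by rewrite mxE big1 // => l _; rewrite mxE kj andbF mulr0.
Qed.

Lemma mdot_deltar m n (A : 'M[R]_(m, n)) i j : mdot A (delta_mx i j) = A i j.
Proof. by rewrite /mdot trmx_delta mxtrace_mul_delta. Qed.

Lemma mdot_mull m n p (A : 'M[R]_(m, n)) (B : 'M[R]_(n, p)) (C : 'M[R]_(m, p)) :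
  mdot (A *m B) C = mdot B (A^T *m C).
Proof. by rewrite /mdot trmx_mul trmxK -mulmxA mxtrace_mulC mulmxA. Qed.

Lemma mdot_sym_trmx n (S A : 'M[R]_n) : S^T = S -> mdot S A^T = mdot S A.
Proof. by move=> sS; rewrite /mdot trmxK -[RHS]mxtrace_tr trmx_mul trmxK sS mxtrace_mulC. Qed.

Lemma msym_sym n (A : 'M[R]_n) : (msym A)^T = msym A.
Proof. by rewrite /msym linearZ /= linearD /= trmxK addrC. Qed.

Lemma mdot_msym n (S A : 'M[R]_n) : S^T = S -> mdot (msym A) S = mdot A S.
Proof.
move=> sS; rewrite /msym mdotZl mdotDl -[mdot A^T S]mdotC mdot_sym_trmx // mdotC; lra.
Qed.

Lemma mdot_sym_gram m n (S : 'M[R]_n) (x v : 'M[R]_(m, n)) :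
  S^T = S -> mdot S (v^T *m x + x^T *m v) = 2 * mdot (x *m S) v.
Proof.
have -> : v^T *m x = (x^T *m v)^T by rewrite trmx_mul trmxK.
move=> sS; rewrite mdotDr mdot_sym_trmx //.
by rewrite mdotC mdot_mull trmxK mdotC; lra.
Qed.

End FrobeniusProduct.

Section Givens.
Variables (R : realType) (n : nat) (i j : 'I_n) (c s : R).

Definition givens : 'M[R]_n :=
  1%:M + (c - 1) *: (delta_mx i i + delta_mx j j) + s *: (delta_mx j i - delta_mx i j).

Lemma givens_orthogonal : i != j -> c ^+ 2 + s ^+ 2 = 1 -> givens^T *m givens = 1%:M.
Proof.
move=> ij cs; have ji : j != i by rewrite eq_sym.
rewrite /givens !linearD /= !linearZ /= ?linearN /= trmx1 !trmx_delta.
rewrite !mulmxDl !mulNmx -!scalemxAl !mul1mx !mulmx1.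
rewrite !mul_delta_mx_cond !eqxx (negPf ij) (negPf ji).
apply/matrixP => a b; rewrite !mxE.
move: ((a == i) && (b == i))%:R ((a == j) && (b == j))%:R => p q.
move: ((a == i) && (b == j))%:R ((a == j) && (b == i))%:R (a == b)%:R => u w o.
apply/eqP; rewrite -subr_eq0; apply/eqP.
transitivity ((c ^+ 2 + s ^+ 2 - 1) * (p + q)); first ring.
by rewrite cs subrr mul0r.
Qed.

Lemma mxtrace_mul_tr_givens (A : 'M[R]_n) :
  \tr (A *m givens^T) = \tr A + (c - 1) * (A i i + A j j) + s * (A j i - A i j).
Proof.
rewrite /givens !linearD /= !linearZ /= ?linearN /= trmx1 !trmx_delta.
by rewrite mulmx1 !mxtrace_mul_delta; ring.
Qed.

End Givens.

Lemma linear_le_quadratic_eq0 (R : realType) (a b : R) :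
  (forall t, t * b <= t ^+ 2 * a) -> b = 0.
Proof.
move=> le_tb; have ha : 0 < 1 + `|a| by rewrite ltr_pwDl.
set u := b / (1 + `|a|).
have hb : b = u * (1 + `|a|) by rewrite /u divfK // gt_eqF.
have := le_tb u; rewrite hb => Hu.
suff -> : u = 0 by rewrite mul0r.
have : u ^+ 2 * (1 + `|a| - a) <= 0 by nra.
have : 1 <= 1 + `|a| - a by have := ler_norm a; lra.
nra.
Qed.

Section StiefelProjection.
Variables (R : realType) (d r : nat).
Implicit Types x y : 'M[R]_(d, r).

Lemma mdot_stiefel y : stiefel y -> mdot y y = r%:R.
Proof. by rewrite /stiefel /mdot mxtrace_mulC => ->; rewrite mxtrace1. Qed.

Lemma stiefel_mull (Q : 'M[R]_d) y : Q^T *m Q = 1%:M -> stiefel y -> stiefel (Q *m y).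
Proof.
by move=> hQ sy; rewrite /stiefel trmx_mul -mulmxA (mulmxA Q^T) hQ mul1mx.
Qed.

Lemma proj_St_mdot_le x x' y : is_proj_St x x' -> stiefel y -> mdot x y <= mdot x x'.
Proof.
move=> [sx' min_x'] sy; have := min_x' y sy.
rewrite /frob ler_sqrt ?mdot_ge0 //.
rewrite !(mdotDl, mdotDr, mdotNl, mdotNr) (mdot_stiefel sx') (mdot_stiefel sy).
rewrite (mdotC y x) (mdotC x' x); lra.
Qed.

Lemma proj_St_sym x x' : is_proj_St x x' -> (x *m x'^T)^T = x *m x'^T.
Proof.
move=> hp; set K := x *m x'^T.
apply/matrixP => i j; rewrite mxE.
have [<-|ij] := eqVneq i j; first by [].
suff : K j i - K i j = 0 by lra.
apply: (@linear_le_quadratic_eq0 _ (K i i + K j j)) => t.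
have ht : 0 < 1 + t ^+ 2 by rewrite ltr_pwDl // sqr_ge0.
(* the rational parametrisation of the unit circle, so that optimality of [x']
   against the rotation [givens i j c s] is a quadratic inequality in [t] *)
pose c := (1 - t ^+ 2) / (1 + t ^+ 2); pose s := 2 * t / (1 + t ^+ 2).
have cs : c ^+ 2 + s ^+ 2 = 1 by rewrite /c /s; field; rewrite gt_eqF.
have := proj_St_mdot_le hp (stiefel_mull (givens_orthogonal ij cs) hp.1).
rewrite /mdot trmx_mul mulmxA -/K mxtrace_mul_tr_givens => le_tr.
have rot_le0 : (c - 1) * (K i i + K j j) + s * (K j i - K i j) <= 0 by lra.
rewrite -subr_le0 (_ : _ - _ = (1 + t ^+ 2) / 2 * ((c - 1) * (K i i + K j j) + s * (K j i - K i j))).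
  by rewrite pmulr_rle0 // divr_gt0.
by rewrite /c /s; field; rewrite gt_eqF.
Qed.

Lemma proj_St_gram_sym x x' : is_proj_St x x' -> (x'^T *m x)^T = x'^T *m x.
Proof.
move=> hp; have sx' : x'^T *m x' = 1%:M := hp.1.
have K := proj_St_sym hp; rewrite trmx_mul trmxK in K.
rewrite trmx_mul trmxK.
transitivity (x'^T *m (x' *m x^T) *m x'); first by rewrite !mulmxA sx' mul1mx.
by rewrite K !mulmxA -mulmxA sx' mulmx1.
Qed.

Lemma proj_St_polar x x' : is_proj_St x x' -> x = x' *m (x'^T *m x).
Proof.
move=> hp; have sx' : x'^T *m x' = 1%:M := hp.1.
rewrite -(proj_St_gram_sym hp) trmx_mul trmxK mulmxA.
have K := proj_St_sym hp; rewrite trmx_mul trmxK in K.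
by rewrite K -mulmxA sx' mulmx1.
Qed.
End StiefelProjection.

Section EntrywiseLimits.
Context {R : realType} {T : Type} (F : set_system T) {FF : Filter F}.

Definition entrywise_cvg m n (A : T -> 'M[R]_(m, n)) (A0 : 'M[R]_(m, n)) : Prop :=
  forall i j, A t i j @[t --> F] --> A0 i j.

Lemma cvg_entrywise m n (A : T -> 'M[R]_(m, n)) A0 :
  A t @[t --> F] --> A0 -> entrywise_cvg A A0.
Proof. by move=> cvgA i j; exact: (cvg_comp _ _ cvgA (@coord_continuous R m n i j A0)). Qed.

Lemma entrywise_cvg_mul m n p (A : T -> 'M[R]_(m, n)) (B : T -> 'M[R]_(n, p)) A0 B0 :
  entrywise_cvg A A0 -> entrywise_cvg B B0 ->
  entrywise_cvg (fun t => A t *m B t) (A0 *m B0).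
Proof.
move=> cvgA cvgB i j; rewrite mxE; under eq_cvg do rewrite mxE.
by apply: (cvg_big (@add_continuous R^o)) => k _; exact: cvgM.
Qed.

Lemma entrywise_cvg_tr m n (A : T -> 'M[R]_(m, n)) A0 :
  entrywise_cvg A A0 -> entrywise_cvg (fun t => (A t)^T) A0^T.
Proof. by move=> cvgA i j; rewrite mxE; under eq_cvg do rewrite mxE; exact: cvgA. Qed.

Lemma entrywise_cvg_msym n (A : T -> 'M[R]_n) A0 :
  entrywise_cvg A A0 -> entrywise_cvg (fun t => msym (A t)) (msym A0).
Proof.
move=> cvgA i j; rewrite !mxE; under eq_cvg do rewrite !mxE.
by apply: cvgM; [exact: cvg_cst | apply: cvgD; exact: cvgA].
Qed.

Lemma cvg_mdot m n (A B : T -> 'M[R]_(m, n)) A0 B0 :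
  entrywise_cvg A A0 -> entrywise_cvg B B0 ->
  mdot (A t) (B t) @[t --> F] --> mdot A0 B0.
Proof.
move=> cvgA cvgB; rewrite mdotE; under eq_cvg do rewrite mdotE.
apply: (cvg_big (@add_continuous R^o)) => i _.
by apply: (cvg_big (@add_continuous R^o)) => j _; exact: cvgM.
Qed.

End EntrywiseLimits.

Section MeritAtStiefel.
Variables (R : realType) (d r : nat) (f : 'M[R]_(d, r) -> R) (gamma : R) (x : 'M[R]_(d, r)).
Hypothesis sx : stiefel x.

Let gram_dir (v : 'M[R]_(d, r)) (h : R) : 'M[R]_r :=
  v^T *m x + x^T *m v + h *: (v^T *m v).

Lemma stiefel_gram_shift v h :
  (h *: v + x)^T *m (h *: v + x) - 1%:M = h *: gram_dir v h.
Proof.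
rewrite /gram_dir !linearD /= !linearZ /= !(mulmxDl, mulmxDr) -!(scalemxAl, scalemxAr).
rewrite sx !scalerDr !scalerA; apply/matrixP => a b; rewrite !mxE; ring.
Qed.

Lemma merit_stiefel : merit f gamma x = f x.
Proof.
by rewrite /merit sx subrr mdot0r /frob mdot0r sqrtr0 expr0n /= !mulr0 subr0 addr0.
Qed.

Lemma merit_shift_quotient v h : h != 0 ->
  h^-1 *: (merit f gamma (h *: v + x) - merit f gamma x) =
  h^-1 *: (f (h *: v + x) - f x)
  - 2^-1 * mdot (msym ((h *: v + x)^T *m grad f (h *: v + x))) (gram_dir v h)
  + gamma / 4 * (h * mdot (gram_dir v h) (gram_dir v h)).
Proof.
move=> h0; rewrite merit_stiefel /merit stiefel_gram_shift /frob.
rewrite sqr_sqrtr ?mdot_ge0 // !mdotZr !mdotZl.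
by rewrite /GRing.scale /=; field.
Qed.

Hypotheses (df : differentiable f x) (cg : {for x, continuous (grad f)}).

Lemma derive_merit_stiefel v :
  'D_v (merit f gamma) x =
  'D_v f x - 2^-1 * mdot (msym (x^T *m grad f x)) (v^T *m x + x^T *m v).
Proof.
set S := msym (x^T *m grad f x); set Z := gram_dir v.
have cvg_h : h @[h --> (0:R)^'] --> 0 by exact: cvg_within.
have cvg_shift : h *: v + x @[h --> (0:R)^'] --> x.
  rewrite -[x in (_ --> x)]add0r -(scale0r v).
  by apply: cvgD; [apply: cvgZ => //; exact: cvg_cst | exact: cvg_cst].
have cvg_Z : entrywise_cvg (0:R)^' Z (Z 0).
  apply: cvg_entrywise; apply: cvgD; first exact: cvg_cst.
  by apply: cvgZ => //; exact: cvg_cst.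
have cvg_S : entrywise_cvg (0:R)^' (fun h => msym ((h *: v + x)^T *m grad f (h *: v + x))) S.
  apply: entrywise_cvg_msym; apply: entrywise_cvg_mul.
    by apply: entrywise_cvg_tr; exact: cvg_entrywise.
  by apply: cvg_entrywise; exact: (cvg_comp _ _ cvg_shift cg).
apply: cvg_lim => //.
have quotient_eq : {near (0:R)^', (fun h => h^-1 *: (f (h *: v + x) - f x)
    - 2^-1 * mdot (msym ((h *: v + x)^T *m grad f (h *: v + x))) (Z h)
    + gamma / 4 * (h * mdot (Z h) (Z h))) =1
   (fun h => h^-1 *: ((merit f gamma \o shift x) (h *: v) - merit f gamma x))}.
  near=> h; rewrite /= merit_shift_quotient //.
  by near: h; exact: nbhs_dnbhs_neq.
have -> : 'D_v f x - 2^-1 * mdot S (v^T *m x + x^T *m v)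
    = 'D_v f x - 2^-1 * mdot S (Z 0) + gamma / 4 * (0 * mdot (Z 0) (Z 0)).
  by rewrite /Z /gram_dir scale0r addr0 mul0r mulr0 addr0.
apply: cvg_trans (near_eq_cvg quotient_eq) _.
apply: cvgD; last by apply: cvgM; [exact: cvg_cst | apply: cvgM => //; exact: cvg_mdot].
apply: cvgB; first exact: (@diff_derivable _ _ _ _ _ v df).
by apply: cvgM; [exact: cvg_cst | exact: cvg_mdot].
Unshelve. all: by end_near.
Qed.
End MeritAtStiefel.

Section TangentProjection.
Variables (R : realType) (d r : nat).

Definition tangent_proj (x G : 'M[R]_(d, r)) : 'M[R]_(d, r) := G - x *m msym (x^T *m G).

Lemma mdot_tangent_proj_normal (x G : 'M[R]_(d, r)) (P : 'M[R]_r) :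
  stiefel x -> P^T = P -> mdot (tangent_proj x G) (x *m P) = 0.
Proof.
move=> sx sP; rewrite /tangent_proj mdotDl mdotNl mdot_mull mulmxA sx mul1mx mdot_msym //.
by rewrite mdotC mdot_mull mdotC subrr.
Qed.

Lemma grad_merit_stiefel (f : 'M[R]_(d, r) -> R) gamma x :
  stiefel x -> differentiable f x -> {for x, continuous (grad f)} ->
  grad (merit f gamma) x = tangent_proj x (grad f x).
Proof.
move=> sx df cg; apply/matrixP => i j.
rewrite /grad !mxE derive_merit_stiefel // mdot_sym_gram ?msym_sym // mdot_deltar.
by rewrite mulrA mulVf ?pnatr_eq0 // mul1r !mxE.
Qed.

End TangentProjection.

Unset Implicit Arguments.
Set Strict Implicit.

Theorem lemma9 (R : realType) (d r : nat) (f : 'M[R]_(d, r) -> R)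
  (gamma eps : R) (x x' : 'M[R]_(d, r)) :
  C2 f -> 0 < gamma -> 0 < eps -> eps < 3 / 4 ->
  stiefel_eps eps x -> is_proj_St x x' ->
  mdot (grad (merit f gamma) x') (x - x') = 0.
Proof.
move=> [df [dgf _]] _ _ _ _ hp.
rewrite (grad_merit_stiefel gamma hp.1 (df x') (differentiable_continuous (dgf x'))).
have -> : x - x' = x' *m (x'^T *m x - 1%:M) by rewrite mulmxBr mulmx1 -proj_St_polar.
apply: mdot_tangent_proj_normal hp.1 _.
by rewrite linearB /= (proj_St_gram_sym hp) trmx1.
Qed.
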